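(* For any $\sigma$-structure $\mathcal{A}$, the $\mathfrak{g}$-guarded tree-width of $\mathcal{A}$ and the $\mathfrak{g}$-guarded coalgebra number of $\mathcal{A}$ coincide.
   Context: $\mathfrak{g}$ is atom or loose guarding (for which the resource-bounded comonads $\mathbb{G}_k^{\mathfrak{g}}$ are defined). $\mathbb{G}_k^{\mathfrak{g}}\mathcal{A}$ has universe the equivalence classes $[p,a]$ of focussed plays $\langle p,a\rangle$, where $p$ is a non-empty list of $k$-guarded $\mathfrak{g}$-guarded sets of $\mathcal{A}$ and $a\in\lambda(p)$ (last element), under $\langle p,a\rangle\sim\langle q,a'\rangle$ iff $a=a'$, $p\sqcap q$ is non-empty, and $a\in\lambda(u)$ for all $u$ on the prefix-order paths from $p\sqcap q$ to $p$ and to $q$; relations $R^{\mathbb{G}_k\mathcal{A}}=\{([p,a_1],\ldots,[p,a_r])\mid R^{\mathcal{A}}(a_1,\ldots,a_r)\}$. A $\mathfrak{g}$-guarded decomposition of $\mathcal{A}$ is a map $\tau$ from $A$ to $\mathfrak{g}$-guarded plays, with image $P_\tau$, that is reflexive ($a\in\lambda(\tau(a))$), edge covering (adjacent elements in the Gaifman graph lie together in some $\lambda(p)$, $p\in P_\tau$), minimal ($[\tau(a),a]=[q,a]$ implies $\tau(a)\sqsubseteq q$) and vertex connected (for $q$ below some element of $P_\tau$ with $a\in\lambda(q)$, $[\tau(a),a]=[q,a]$); it is $k$-bounded if $|\lambda(p)|\le k$ for all $p\in P_\tau$. The $\mathfrak{g}$-guarded tree-width of $\mathcal{A}$ is the least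 $k$ such that $\mathcal{A}$ has a $k$-bounded $\mathfrak{g}$-guarded decomposition; the $\mathfrak{g}$-guarded coalgebra number is the least $k$ such that there is a coalgebra $\mathcal{A}\to\mathbb{G}_k^{\mathfrak{g}}\mathcal{A}$. *)

From Stdlib Require List.
From mathcomp Require Import all_boot.
Set Implicit Arguments.
Unset Strict Implicit.
Unset Printing Implicit Defensive.

Record signature := Signature { sym : Type; arity : sym -> nat }.

Record structure (s : signature) := Structure {
  car :> Type;
  rel : forall R : sym s, ('I_(arity R) -> car) -> Prop }.
Arguments rel {s} _ R _.

Definition hom (s : signature) (A B : structure s) (f : A -> B) : Prop :=
  forall (R : sym s) (t : 'I_(arity R) -> A), rel A R t -> rel B R (f \o t).

Definition image (T U : Type) (f : T -> U) (X : T -> Prop) : U -> Prop :=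
  fun y => exists x, X x /\ y = f x.

Definition card_le (T : Type) (X : T -> Prop) (k : nat) : Prop :=
  exists f : 'I_k -> T, forall x, X x -> exists i, f i = x.

Inductive guarding := AtomGuarding | LooseGuarding.

Definition singleton_set (T : Type) (X : T -> Prop) : Prop :=
  exists x, forall y, X y <-> y = x.

Definition guarded (s : signature) (g : guarding) (A : structure s) (X : A -> Prop) : Prop :=
  singleton_set X \/
  match g with
  | AtomGuarding =>
      exists (R : sym s) (t : 'I_(arity R) -> A),
        rel A R t /\ forall y, X y <-> exists i, t i = y
  | LooseGuarding =>
      forall b c, X b -> X c ->
        exists (R : sym s) (t : 'I_(arity R) -> A),
          [/\ rel A R t, (exists i, t i = b), (exists i, t i = c) & forall i, X (t i)]
  end.

Definition kguarded (s : signature) (g : guarding) (k : nat) (A : structure s)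
  (X : A -> Prop) : Prop := guarded g X /\ card_le X k.

Definition lam (T : Type) (p : seq (T -> Prop)) : T -> Prop := last (fun _ => False) p.

Definition prefix (T : Type) (r p : seq T) : Prop := exists u, p = r ++ u.

Definition is_meet (T : Type) (p q r : seq T) : Prop :=
  [/\ prefix r p, prefix r q & forall u, prefix u p -> prefix u q -> prefix u r].

Definition gplay (s : signature) (g : guarding) (A : structure s) (p : seq (A -> Prop)) : Prop :=
  p <> [::] /\ forall X, List.In X p -> guarded g X.

Definition kgplay (s : signature) (g : guarding) (k : nat) (A : structure s)
  (p : seq (A -> Prop)) : Prop :=
  p <> [::] /\ forall X, List.In X p -> kguarded g k X.

Definition play_eqv (T : Type) (x y : seq (T -> Prop) * T) : Prop :=
  let (p, a) := x in let (q, a') := y in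
  a = a' /\
  exists r, [/\ is_meet p q r, r <> [::],
     (forall u, prefix r u -> prefix u p -> lam u a) &
     (forall u, prefix r u -> prefix u q -> lam u a)].

Definition valid (s : signature) (g : guarding) (k : nat) (A : structure s)
  (x : seq (A -> Prop) * A) : Prop := kgplay g k x.1 /\ lam x.1 x.2.

(** The comonad G_k^g : universe = equivalence classes [p,a] *)
Definition Gcar (s : signature) (g : guarding) (k : nat) (A : structure s) : Type :=
  { S : seq (A -> Prop) * A -> Prop | exists x, valid g k x /\ S = play_eqv x }.

Definition is_class (s : signature) (g : guarding) (k : nat) (A : structure s)
  (c : Gcar g k A) (p : seq (A -> Prop)) (a : A) : Prop :=
  valid g k (p, a) /\ proj1_sig c = play_eqv (p, a).

Definition Gk (s : signature) (g : guarding) (k : nat) (A : structure s) : structure s :=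
  @Structure s (Gcar g k A)
    (fun R c => exists (p : seq (A -> Prop)) (t : 'I_(arity R) -> A),
                  rel A R t /\ forall j, is_class (c j) p (t j)).

(* comultiplication: delta [p,a] = [p#, [p,a]] where
   p# = [X_1', ..., X_n'] with X_i' = { [p_{<=i}, b] | b in X_i } *)
Definition sharp (s : signature) (g : guarding) (k : nat) (A : structure s)
  (p : seq (A -> Prop)) : seq (Gk g k A -> Prop) :=
  mkseq (fun i => fun c : Gk g k A =>
           exists b, nth (fun _ => False) p i b /\ is_class c (take i.+1 p) b) (size p).

Definition delta_rel (s : signature) (g : guarding) (k : nat) (A : structure s)
  (c : Gk g k A) (d : Gk g k (Gk g k A)) : Prop :=
  exists p a, is_class c p a /\ is_class d (sharp g k p) c.

Definition Gmap_rel (s : signature) (g : guarding) (k : nat) (A B : structure s)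
  (f : A -> B) (c : Gk g k A) (d : Gk g k B) : Prop :=
  exists p a, is_class c p a /\ is_class d (map (image f) p) (f a).

(* a coalgebra A -> G_k A: a homomorphism satisfying the counit and comultiplication laws *)
Definition coalgebra (s : signature) (g : guarding) (k : nat) (A : structure s)
  (alpha : A -> Gk g k A) : Prop :=
  [/\ hom alpha,
      (forall a, exists p, is_class (alpha a) p a) &
      (forall a, exists d : Gk g k (Gk g k A),
          delta_rel (alpha a) d /\ Gmap_rel alpha (alpha a) d)].

Definition has_coalgebra (s : signature) (g : guarding) (k : nat) (A : structure s) : Prop :=
  exists alpha : A -> Gk g k A, coalgebra alpha.

Definition gaifman_adj (s : signature) (A : structure s) (a b : A) : Prop :=
  a <> b /\ exists (R : sym s) (t : 'I_(arity R) -> A),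
    [/\ rel A R t, (exists i, t i = a) & (exists i, t i = b)].

Definition decomposition (s : signature) (g : guarding) (A : structure s)
  (tau : A -> seq (A -> Prop)) : Prop :=
  [/\ (forall a, gplay g (tau a)),
      (forall a, lam (tau a) a),
      (forall a b, gaifman_adj a b -> exists c, lam (tau c) a /\ lam (tau c) b),
      (forall a q, gplay g q -> play_eqv (tau a, a) (q, a) -> prefix (tau a) q) &
      (forall a b q, gplay g q -> prefix q (tau b) -> lam q a ->
                     play_eqv (tau a, a) (q, a))].

Definition kbounded (s : signature) (A : structure s) (k : nat)
  (tau : A -> seq (A -> Prop)) : Prop :=
  forall c, card_le (lam (tau c)) k.

Definition has_decomp (s : signature) (g : guarding) (k : nat) (A : structure s) : Prop :=
  exists tau : A -> seq (A -> Prop), decomposition g tau /\ kbounded k tau.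

Definition is_guarded_treewidth (s : signature) (g : guarding) (A : structure s) (n : nat) : Prop :=
  has_decomp g n A /\ forall j, has_decomp g j A -> n <= j.

Definition is_coalgebra_number (s : signature) (g : guarding) (A : structure s) (n : nat) : Prop :=
  has_coalgebra g n A /\ forall j, has_coalgebra g j A -> n <= j.

From mathcomp Require Import all_boot.
From Stdlib Require Import ClassicalEpsilon FunctionalExtensionality.
From Stdlib Require Import PropExtensionality ProofIrrelevance Wf_nat.
Set Implicit Arguments.
Unset Strict Implicit.
Unset Printing Implicit Defensive.

(* A coalgebra alpha sends each a to a class [p, a], and the least representative of that
   class in the prefix order is a k-bounded decomposition: minimality is built in, the
   homomorphism law gives edge covering, and the comultiplication law, read below the common
   prefix of p# and alpha(p), turns every [q, c] with q a prefix of that representative into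
   an image alpha(y), hence into alpha(c); this is vertex connectivity.  Conversely, a
   k-bounded decomposition tau gives alpha a = [tau' a, a], where tau' a keeps only the bags
   of the prefixes of tau a that are values of tau; minimality and vertex connectivity give
   [tau' b, b] = [q, b] for every prefix q of tau' a whose last bag contains b, which is the
   comultiplication law.  Both constructions keep the bound k, so the two minima agree. *)

Lemma exists_minimal (X : Type) (f : X -> nat) (P : X -> Prop) :
  (exists x, P x) -> exists2 x, P x & forall y, P y -> f x <= f y.
Proof.
move=> [x Px]; pose Pf n := exists y, P y /\ f y = n.
have Pf_fx : Pf (f x) by exists x.
have [_ [[[y [Py <-]] y_min] _]] := dec_inh_nat_subset_has_unique_least_element
  Pf (fun n => classic (Pf n)) (ex_intro _ _ Pf_fx).
by exists y => // z Pz; apply/leP/y_min; exists z.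
Qed.

Section Prefix.
Variable T : Type.
Implicit Types (x y : T) (p q r u : seq T).

Lemma prefix_refl p : prefix p p.
Proof. by exists [::]; rewrite cats0. Qed.

Lemma prefix_trans r p q : prefix r p -> prefix p q -> prefix r q.
Proof. by move=> [u ->] [v ->]; exists (u ++ v); rewrite catA. Qed.

Lemma prefix0s p : prefix [::] p.
Proof. by exists p. Qed.

Lemma prefixs0 p : prefix p [::] -> p = [::].
Proof. by case: p => [|x p] // [[|y u]]. Qed.

Lemma prefix_cons x y p q : prefix (x :: p) (y :: q) -> x = y /\ prefix p q.
Proof. by move=> [u [-> ->]]; split => //; exists u. Qed.

Lemma prefix_cons2 x p q : prefix p q -> prefix (x :: p) (x :: q).
Proof. by move=> [u ->]; exists u. Qed.

Lemma size_prefix r p : prefix r p -> size r <= size p.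
Proof. by move=> [u ->]; rewrite size_cat leq_addr. Qed.

Lemma prefixE r p : prefix r p <-> take (size r) p = r.
Proof.
split=> [[u ->]|<-]; first by rewrite take_size_cat.
by exists (drop (size r) p); rewrite cat_take_drop.
Qed.

Lemma prefix_take i p : prefix (take i p) p.
Proof. by exists (drop i p); rewrite cat_take_drop. Qed.

Lemma prefix_antisym r p : prefix r p -> prefix p r -> r = p.
Proof.
move=> rp pr; have /prefixE <- := rp.
by rewrite (@anti_leq (size r) (size p)) ?take_size // !size_prefix.
Qed.

Lemma prefix_leq_size r q p : prefix r p -> prefix q p -> size r <= size q ->
  prefix r q.
Proof. by move=> /prefixE rp /prefixE qp le_rq; apply/prefixE; rewrite -qp take_takel. Qed.

Lemma prefix_total r q p : prefix r p -> prefix q p -> prefix r q \/ prefix q r.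
Proof.
move=> rp qp; case: (leqP (size r) (size q)) => [le_rq|/ltnW le_qr].
  by left; apply: prefix_leq_size rp qp le_rq.
by right; apply: prefix_leq_size qp rp le_qr.
Qed.

Lemma prefix_mapE (U : Type) (f : T -> U) (u : seq U) p :
  prefix u (map f p) -> u = map f (take (size u) p).
Proof. by move=> [v e]; rewrite map_take e take_size_cat. Qed.

Lemma map_prefix (U : Type) (f : T -> U) r p : prefix r p -> prefix (map f r) (map f p).
Proof. by move=> [u ->]; rewrite map_cat; exists (map f u). Qed.

Lemma is_meet_exists p q : exists r, is_meet p q r.
Proof.
have meet0 p' q' : p' = [::] \/ q' = [::] -> is_meet p' q' [::].
  move=> e; split=> [||u up uq]; try exact: prefix0s.
  by case: e => e; [move: up | move: uq]; rewrite e => /prefixs0 ->; apply: prefix0s.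
elim: p q => [|x p IHp] [|y q]; try by exists [::]; apply: meet0; auto.
case: (classic (x = y)) => [<-|neq_xy]; last first.
  exists [::]; split=> [||[|z u] up uq]; try exact: prefix0s.
  by case: neq_xy; case: (prefix_cons up) => <- _; case: (prefix_cons uq).
have [r [rp rq r_max]] := IHp q.
exists (x :: r); split=> [||[|z u] up uq]; try exact: prefix_cons2; try exact: prefix0s.
case: (prefix_cons up) => <- {}up; case: (prefix_cons uq) => _ {}uq.
exact/prefix_cons2/r_max.
Qed.

Lemma is_meetC p q r : is_meet p q r -> is_meet q p r.
Proof. by move=> [rp rq r_max]; split=> // u uq up; apply: r_max. Qed.

Lemma is_meet_prefix p q : prefix p q -> is_meet p q p.
Proof. by move=> pq; split=> //; apply: prefix_refl. Qed.

Lemma is_meet_uniq p q r r' : is_meet p q r -> is_meet p q r' -> r = r'.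
Proof. by move=> [rp rq r_max] [r'p r'q r'_max]; apply: prefix_antisym; auto. Qed.

Lemma last_map_nonnil (U : Type) (f : T -> U) d d' p :
  p <> [::] -> last d (map f p) = f (last d' p).
Proof. by case: p => [|x p] // _; rewrite /= last_map. Qed.

Lemma In_prefix x r p : List.In x r -> prefix r p -> List.In x p.
Proof. by move=> xr [u ->]; apply: List.in_or_app; left. Qed.

Lemma In_nth x0 p i : i < size p -> List.In (nth x0 p i) p.
Proof. by elim: p i => [|x p IHp] [|i] //= lt_ip; [left | right; apply: IHp]. Qed.

Lemma In_last x0 p : p <> [::] -> List.In (last x0 p) p.
Proof.
case/lastP: p => [//|p x] _; rewrite last_rcons -cats1.
by apply: List.in_or_app; right; left.
Qed.

Lemma In_map (U : Type) (f : T -> U) p z :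
  List.In z (map f p) -> exists2 x, List.In x p & z = f x.
Proof.
elim: p => [|x p IHp] //= [<-|/IHp [y yp ->]]; first by exists x; first left.
by exists y; first right.
Qed.

End Prefix.

Section PlayEquivalence.
Variable T : Type.
Implicit Types (p q r u w : seq (T -> Prop)) (a b : T) (x y z : seq (T -> Prop) * T).

Definition lam_along a r p := forall u, prefix r u -> prefix u p -> lam u a.

Lemma lam_take p j :
  0 < j <= size p -> lam (take j p) = nth (fun _ => False) p j.-1.
Proof.
by case: j => // j /andP [_ lt_jp]; rewrite /lam (take_nth (fun _ => False) lt_jp) last_rcons.
Qed.

Lemma lam_alongS a r r' p p' :
  lam_along a r p -> prefix r r' -> prefix p' p -> lam_along a r' p'.
Proof.
move=> a_rp rr' p'p u r'u up'.
by apply: a_rp; [apply: prefix_trans rr' r'u | apply: prefix_trans up' p'p].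
Qed.

Lemma lam_along_cat a r p q :
  prefix p q -> lam_along a r p -> lam_along a p q -> lam_along a r q.
Proof.
move=> pq a_rp a_pq u ru uq.
by case: (prefix_total uq pq) => [up|pu]; [apply: a_rp | apply: a_pq].
Qed.

Lemma play_eqv_prefix r p a :
  prefix r p -> r <> [::] -> lam_along a r p -> play_eqv (r, a) (p, a).
Proof.
move=> rp r_nil a_rp; split=> //; exists r; split=> //; first exact: is_meet_prefix.
by move=> u ru ur; rewrite (prefix_antisym ur ru); apply: a_rp => //; apply: prefix_refl.
Qed.

Lemma play_eqv_refl p a : p <> [::] -> lam p a -> play_eqv (p, a) (p, a).
Proof.
move=> p_nil a_p; apply: play_eqv_prefix (prefix_refl p) p_nil _.
by move=> u pu up; rewrite (prefix_antisym up pu).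
Qed.

Lemma play_eqv_prefix_inv r p a b :
  play_eqv (r, a) (p, b) -> prefix r p -> a = b /\ lam_along a r p.
Proof.
move=> [<- [r' [meet_r' _ _ a_r'p]]] rp; split=> //.
by rewrite (is_meet_uniq (is_meet_prefix rp) meet_r').
Qed.

Lemma play_eqv_lam p q a b : play_eqv (p, a) (q, b) -> p <> [::] /\ lam p a.
Proof.
move=> [_ [m [[mp _ _] m_nil a_mp _]]]; split; last by apply: a_mp (prefix_refl p).
by move=> p0; apply/m_nil/prefixs0; rewrite -p0.
Qed.

Lemma play_eqv_sym x y : play_eqv x y -> play_eqv y x.
Proof.
case: x y => [p a] [q b] [<- [r [meet_r r_nil a_rp a_rq]]].
by split=> //; exists r; split=> //; apply: is_meetC.
Qed.

Lemma play_eqv_trans x y z : play_eqv x y -> play_eqv y z -> play_eqv x z.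
Proof.
case: x y z => [p a] [q b] [w c] [<- [r1 [[r1p r1q _] r1_nil a_r1p a_r1q]]].
case=> <- [r2 [[r2q r2w _] r2_nil a_r2q a_r2w]].
wlog r12 : p w r1 r2 r1p r1q r2q r2w r1_nil r2_nil a_r1p a_r1q a_r2q a_r2w / prefix r1 r2.
  move=> th; case: (prefix_total r1q r2q) => [|r21]; first exact: th.
  by apply: play_eqv_sym; apply: (th w p r2 r1).
have [r3 [r3p r3w r3_max]] := is_meet_exists p w.
have r13 : prefix r1 r3 by apply: r3_max => //; apply: prefix_trans r12 r2w.
have a_r1w : lam_along a r1 w.
  by apply: lam_along_cat r2w _ a_r2w; apply: lam_alongS a_r1q (prefix_refl r1) r2q.
split=> //; exists r3; split=> //.
- by move=> r3_0; apply: r1_nil; apply: prefixs0; rewrite -r3_0.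
- exact: lam_alongS a_r1p r13 (prefix_refl p).
- exact: lam_alongS a_r1w r13 (prefix_refl w).
Qed.

Lemma play_eqv_class x y : play_eqv x y -> play_eqv x = play_eqv y.
Proof.
move=> xy; apply: functional_extensionality => z; apply: propositional_extensionality.
by split; [apply: play_eqv_trans (play_eqv_sym xy) | apply: play_eqv_trans xy].
Qed.

End PlayEquivalence.

Lemma least_representative (T : Type) (p : seq (T -> Prop)) (a : T) :
  p <> [::] -> lam p a ->
  exists2 r, prefix r p /\ play_eqv (r, a) (p, a) &
    forall q, play_eqv (r, a) (q, a) -> prefix r q.
Proof.
move=> p_nil a_p; pose stem r := [/\ r <> [::], prefix r p & lam_along a r p].
have stem_p : stem p.
  by split=> [//||u pu up]; [apply: prefix_refl | rewrite (prefix_antisym up pu)].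
have [r [r_nil rp a_rp] r_min] := exists_minimal size (ex_intro stem p stem_p).
exists r; first by split=> //; apply: play_eqv_prefix.
move=> q [_ [m [[mr mq _] m_nil a_mr _]]].
have stem_m : stem m.
  by split=> //; [apply: prefix_trans mr rp | apply: lam_along_cat rp a_mr a_rp].
have rm : prefix r m := prefix_leq_size rp (prefix_trans mr rp) (r_min m stem_m).
by rewrite (prefix_antisym rm mr).
Qed.

Section Classes.
Variables (s : signature) (g : guarding) (k : nat) (A : structure s).
Implicit Types (p q : seq (A -> Prop)) (a b : A) (x : seq (A -> Prop) * A) (c d : Gk g k A).

Definition class_of x (vx : valid g k x) : Gk g k A :=
  exist _ (play_eqv x) (ex_intro _ x (conj vx erefl)).

Lemma is_class_of x (vx : valid g k x) : is_class (class_of vx) x.1 x.2.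
Proof. by case: x vx. Qed.

Lemma is_class_eqv c p a q b :
  is_class c p a -> is_class c q b -> a = b /\ play_eqv (p, a) (q, b).
Proof.
move=> [_ e] [[[q_nil _] b_q] e'].
have pe : play_eqv (p, a) (q, b) by rewrite -e e'; apply: play_eqv_refl.
by split=> //; case: pe.
Qed.

Lemma is_class_fun c d p a : is_class c p a -> is_class d p a -> c = d.
Proof.
move=> [_ e] [_ e']; apply: (eq_sig_hprop (fun _ => proof_irrelevance _)).
by rewrite e e'.
Qed.

Lemma is_class_rep c p a q :
  is_class c p a -> valid g k (q, a) -> play_eqv (p, a) (q, a) -> is_class c q a.
Proof. by move=> [_ e] vq pe; split=> //; rewrite e; apply: play_eqv_class. Qed.

Lemma kgplay_prefix q p : kgplay g k p -> prefix q p -> q <> [::] -> kgplay g k q.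
Proof. by move=> [_ kg_p] qp q_nil; split=> // X Xq; apply: kg_p (In_prefix Xq qp). Qed.

Lemma gplay_prefix q p : gplay g p -> prefix q p -> q <> [::] -> gplay g q.
Proof. by move=> [_ g_p] qp q_nil; split=> // X Xq; apply: g_p (In_prefix Xq qp). Qed.

Lemma kgplay_gplay p : kgplay g k p -> gplay g p.
Proof. by move=> [p_nil kg_p]; split=> // X /kg_p []. Qed.

Lemma take_sharp j p : take j (sharp g k p) = sharp g k (take j p).
Proof.
apply: (@eq_from_nth _ (fun _ => False)); rewrite size_take_min !size_mkseq ?size_take_min //.
move=> i /[dup] lt_i; rewrite leq_min => /andP [lt_ij lt_ip].
by rewrite nth_take // !nth_mkseq ?size_take_min ?nth_take ?take_takel.
Qed.

Lemma sharp_prefix w p : prefix w p -> prefix (sharp g k w) (sharp g k p).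
Proof. by move=> /prefixE <-; rewrite -take_sharp; apply: prefix_take. Qed.

Lemma prefix_sharpE r p : prefix r (sharp g k p) -> r = sharp g k (take (size r) p).
Proof. by move=> /prefixE r_eq; rewrite -take_sharp r_eq. Qed.

Lemma lam_sharp p c : lam (sharp g k p) c <-> exists b, lam p b /\ is_class c p b.
Proof.
case/lastP: p => [|p x]; first by split=> [|[b [[]]]].
rewrite /lam /sharp size_rcons mkseqS !last_rcons nth_rcons ltnn eqxx.
by rewrite take_oversize ?size_rcons.
Qed.

End Classes.

Section CoalgebraToDecomposition.
Variables (s : signature) (g : guarding) (k : nat) (A : structure s).
Variable alpha : A -> Gk g k A.
Hypothesis alpha_hom : hom alpha.
Hypothesis alpha_counit : forall a, exists p, is_class (alpha a) p a.
Hypothesis alpha_comult : forall a, exists d : Gk g k (Gk g k A),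
  delta_rel (alpha a) d /\ Gmap_rel alpha (alpha a) d.
Implicit Types (p q : seq (A -> Prop)) (a b c : A).

Lemma exists_least_class_rep a : exists r, is_class (alpha a) r a /\
  forall q, play_eqv (r, a) (q, a) -> prefix r q.
Proof.
have [p a_cp] := alpha_counit a; have [[kg_p a_p] _] := a_cp.
have [r [rp rp_eqv] r_min] := least_representative kg_p.1 a_p.
have [r_nil a_r] := play_eqv_lam rp_eqv.
exists r; split=> //; apply: is_class_rep a_cp _ (play_eqv_sym rp_eqv).
by split=> //; apply: kgplay_prefix kg_p rp r_nil.
Qed.

Definition root a :=
  proj1_sig (constructive_indefinite_description _ (exists_least_class_rep a)).

Lemma root_spec a : is_class (alpha a) (root a) a /\
  forall q, play_eqv (root a, a) (q, a) -> prefix (root a) q.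
Proof.
exact: proj2_sig (constructive_indefinite_description _ (exists_least_class_rep a)).
Qed.

Lemma root_class a : is_class (alpha a) (root a) a.
Proof. exact: (root_spec a).1. Qed.

Lemma root_least a q : play_eqv (root a, a) (q, a) -> prefix (root a) q.
Proof. exact: (root_spec a).2. Qed.

Lemma alpha_class_point a p b : is_class (alpha a) p b -> b = a.
Proof. by move/is_class_eqv/(_ (root_class a)) => []. Qed.

Lemma root_stem a p : is_class (alpha a) p a -> prefix (root a) p /\ lam_along a (root a) p.
Proof.
move/(is_class_eqv (root_class a)) => [_ ap_eqv]; have rp := root_least ap_eqv.
by split=> //; case: (play_eqv_prefix_inv ap_eqv rp).
Qed.

Lemma root_edge_cover a b : gaifman_adj a b -> exists c, lam (root c) a /\ lam (root c) b.
Proof.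
move=> [_ [R [t [Rt [i <-] [j <-]]]]].
have [p [t' [_ t'_cls]]] := alpha_hom Rt.
have stem l : prefix (root (t l)) p /\ lam_along (t l) (root (t l)) p.
  by apply: root_stem; rewrite -{2}(alpha_class_point (t'_cls l)); apply: t'_cls.
have lam_root l : lam (root (t l)) (t l) by case: (root_class (t l)) => [[_ ?] _].
have [[ti_p a_i] [tj_p a_j]] := (stem i, stem j).
case: (prefix_total ti_p tj_p) => [ij|ji].
  by exists (t j); split; [apply: a_i | apply: lam_root].
by exists (t i); split; [apply: lam_root | apply: a_j].
Qed.

Lemma comult_meet b : exists p1 p2 r, [/\ is_class (alpha b) p1 b,
  prefix r (sharp g k p1), prefix r (map (image alpha) p2), r <> [::]
  & lam_along (alpha b) r (sharp g k p1)].
Proof.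
have [d [[p1 [b1 [b_p1 d_p1]]] [p2 [b2 [b_p2 d_p2]]]]] := alpha_comult b.
move: (alpha_class_point b_p1) (alpha_class_point b_p2) => b1b b2b; subst b1 b2.
have [_ [_ [r [[r_p1 r_p2 _] r_nil a_r _]]]] := is_class_eqv d_p1 d_p2.
by exists p1, p2, r.
Qed.

Lemma comult_stem b p r : is_class (alpha b) p b -> prefix r (sharp g k p) ->
  lam_along (alpha b) r (sharp g k p) -> lam_along b (take (size r) p) p.
Proof.
move=> b_p r_sp a_r u ru up.
have : lam (sharp g k u) (alpha b).
  apply: a_r; last exact: sharp_prefix up.
  by rewrite (prefix_sharpE r_sp); apply: sharp_prefix.
by move=> /lam_sharp [b' [b'_u /alpha_class_point b'b]]; rewrite -b'b.
Qed.

Lemma root_prefix_meet b p r : is_class (alpha b) p b -> prefix r (sharp g k p) ->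
  r <> [::] -> lam_along (alpha b) r (sharp g k p) -> prefix (root b) (take (size r) p).
Proof.
move=> b_p r_sp r_nil a_r.
have rp_nil : take (size r) p <> [::].
  by move=> rp0; apply: r_nil; rewrite (prefix_sharpE r_sp) rp0.
have rp_eqv := play_eqv_prefix (prefix_take _ _) rp_nil (comult_stem b_p r_sp a_r).
have [_ bp_eqv] := is_class_eqv (root_class b) b_p.
exact/root_least/(play_eqv_trans bp_eqv)/play_eqv_sym.
Qed.

Lemma root_vertex_connected b q c : q <> [::] -> prefix q (root b) -> lam q c ->
  is_class (alpha c) q c.
Proof.
move=> q_nil q_rb c_q.
have [p1 [p2 [r [b_p1 r_sp1 r_p2 r_nil a_r]]]] := comult_meet b.
have [rb_p1 _] := root_stem b_p1.
have q_r : prefix q (take (size r) p1).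
  exact: prefix_trans q_rb (root_prefix_meet b_p1 r_sp1 r_nil a_r).
have vq : valid g k (q, c).
  by split=> //; apply: kgplay_prefix b_p1.1.1 (prefix_trans q_rb rb_p1) q_nil.
have sq_p2 : prefix (sharp g k q) (map (image alpha) p2).
  by apply: prefix_trans r_p2; rewrite (prefix_sharpE r_sp1); apply: sharp_prefix.
have sq_nil : take (size (sharp g k q)) p2 <> [::].
  move=> p0; move: (congr1 size (prefix_mapE sq_p2)).
  by rewrite p0 size_mkseq; case: (q) q_nil.
(* [q, c] lies in the last bag of q#, which is a bag of alpha(p2). *)
have : lam (sharp g k q) (class_of vq).
  by apply/lam_sharp; exists c; split=> //; apply: is_class_of.
rewrite (prefix_mapE sq_p2) /lam (last_map_nonnil _ _ (fun _ => False) sq_nil).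
move=> [y [_ cy]]; have c_y : is_class (alpha y) q c by rewrite -cy; apply: is_class_of.
by rewrite {1}(alpha_class_point c_y).
Qed.

Lemma root_decomposition : decomposition g root /\ kbounded k root.
Proof.
have kg_root a : kgplay g k (root a) := (root_class a).1.1.
split; last by move=> a; apply: ((kg_root a).2 _ (In_last _ (kg_root a).1)).2.
split=> [a|a|a b|a q _|a b q [q_nil _] q_rb a_q].
- exact: kgplay_gplay.
- exact: (root_class a).1.2.
- exact: root_edge_cover.
- exact: root_least.
- by have [_] := is_class_eqv (root_class a) (root_vertex_connected q_nil q_rb a_q).
Qed.

End CoalgebraToDecomposition.

Lemma has_coalgebra_decomp (s : signature) (g : guarding) (k : nat) (A : structure s) :
  has_coalgebra g k A -> has_decomp g k A.
Proof.
move=> [alpha [hom_alpha counit comult]].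
by exists (root counit); apply: root_decomposition.
Qed.

Section FilteredPrefixes.
Variables (T : Type) (P : pred (seq T)).
Implicit Types (p w : seq T) (x : T).

Definition prefixes p := mkseq (fun i => take i.+1 p) (size p).

Definition prefixes_in p := [seq w <- prefixes p | P w].

Lemma prefixes_in_rcons p x : prefixes_in (rcons p x) =
  if P (rcons p x) then rcons (prefixes_in p) (rcons p x) else prefixes_in p.
Proof.
rewrite /prefixes_in -filter_rcons; congr filter.
rewrite /prefixes size_rcons mkseqS take_oversize ?size_rcons //; congr rcons.
by apply/eq_in_map => i; rewrite mem_iota add0n => /andP [_ lt_ip]; rewrite -cats1 takel_cat.
Qed.

Lemma prefix_prefixes_in w p : prefix w p -> prefix (prefixes_in w) (prefixes_in p).
Proof.
move=> [u ->]; elim/last_ind: u => [|u x IHu]; first by rewrite cats0; apply: prefix_refl.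
rewrite -rcons_cat prefixes_in_rcons; case: ifP => // _.
by apply: prefix_trans IHu _; exists [:: rcons (w ++ u) x]; rewrite cats1.
Qed.

Lemma In_prefixes_in w p : List.In w (prefixes_in p) -> [/\ P w, prefix w p & w <> [::]].
Proof.
elim/last_ind: p => [//|p x IHp].
have {}IHp : List.In w (prefixes_in p) -> [/\ P w, prefix w (rcons p x) & w <> [::]].
  move=> /IHp [? wp ?]; split=> //; apply: prefix_trans wp _.
  by exists [:: x]; rewrite cats1.
rewrite prefixes_in_rcons; case: ifP => [P_px|_]; last exact: IHp.
rewrite -[rcons (prefixes_in p) _]cats1 => /(List.in_app_or _ _ _) [/IHp //|[<-|[]]].
by split=> //; [apply: prefix_refl | case: (p)].
Qed.

Lemma last_prefixes_in d p : P p -> p <> [::] ->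
  prefixes_in p <> [::] /\ last d (prefixes_in p) = p.
Proof.
case/lastP: p => [//|p x] P_px _; rewrite prefixes_in_rcons P_px last_rcons.
by split=> //; case: (prefixes_in p).
Qed.

Lemma take_prefixes_in p i : i < size (prefixes_in p) ->
  take i.+1 (prefixes_in p) = prefixes_in (nth [::] (prefixes_in p) i).
Proof.
elim/last_ind: p i => [//|p x IHp] i; rewrite prefixes_in_rcons.
case: ifP => [P_px|_]; last exact: IHp.
rewrite size_rcons ltnS leq_eqVlt nth_rcons => /orP [/eqP ->|lt_i].
  by rewrite ltnn eqxx take_oversize ?size_rcons // prefixes_in_rcons P_px.
by rewrite lt_i -cats1 takel_cat //; apply: IHp.
Qed.

Lemma prefixes_in_of_prefix u p : prefix u (prefixes_in p) -> u <> [::] ->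
  exists w, [/\ u = prefixes_in w, P w, prefix w p & w <> [::]].
Proof.
case: u => [//|y u] /prefixE u_eq _; set n := size u in u_eq.
have lt_n : n < size (prefixes_in p).
  by move: (congr1 size u_eq); rewrite size_take_min /= => <-; apply: geq_minr.
have [P_w wp w_nil] := In_prefixes_in (In_nth [::] lt_n).
by exists (nth [::] (prefixes_in p) n); split=> //; rewrite -u_eq take_prefixes_in.
Qed.

Lemma prefix_of_prefixes_in r w : P r -> r <> [::] ->
  prefix (prefixes_in r) (prefixes_in w) -> prefix r w.
Proof.
move=> P_r r_nil rw; have [C_nil C_last] := last_prefixes_in [::] P_r r_nil.
have r_In : List.In r (prefixes_in r) by rewrite -{1}C_last; apply: In_last.
by have [] := In_prefixes_in (In_prefix r_In rw).
Qed.

End FilteredPrefixes.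

Section HomImage.
Variables (s : signature) (g : guarding) (k : nat) (A B : structure s).
Variables (f : A -> B) (f_hom : hom f).

Lemma guarded_image X : guarded g X -> guarded g (image f X).
Proof.
case=> [[x X_x]|gX]; [left | right].
  exists (f x) => y; split=> [[z [/X_x -> ->]] //|->].
  by exists x; split=> //; apply/X_x.
case: g gX => [[R [t [Rt X_t]]]|gX].
  exists R, (f \o t); split; first exact: f_hom.
  move=> y; split=> [[z [/X_t [i <-] ->]]|[i <-]]; first by exists i.
  by exists (t i); split=> //; apply/X_t; exists i.
move=> _ _ [x [Xx ->]] [y [Xy ->]].
have [R [t [Rt [i ti] [j tj] X_t]]] := gX x y Xx Xy.
exists R, (f \o t); split; first exact: f_hom.
- by exists i; rewrite /= ti.
- by exists j; rewrite /= tj.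
- by move=> l; exists (t l).
Qed.

Lemma kgplay_image p : kgplay g k p -> kgplay g k (map (image f) p).
Proof.
move=> [p_nil kg_p]; split; first by case: p p_nil {kg_p}.
move=> Y /(@In_map _ _ (image f)) [X /kg_p [gX [h X_h]] ->].
split; first exact: guarded_image.
by exists (f \o h) => y [x [/X_h [i <-] ->]]; exists i.
Qed.

End HomImage.

Section DecompositionToCoalgebra.
Variables (s : signature) (g : guarding) (k : nat) (A : structure s).
Variable tau : A -> seq (A -> Prop).
Hypothesis tau_gplay : forall a, gplay g (tau a).
Hypothesis tau_refl : forall a, lam (tau a) a.
Hypothesis tau_edge : forall a b, gaifman_adj a b -> exists c, lam (tau c) a /\ lam (tau c) b.
Hypothesis tau_min : forall a q, gplay g q -> play_eqv (tau a, a) (q, a) -> prefix (tau a) q.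
Hypothesis tau_vc : forall a b q, gplay g q -> prefix q (tau b) -> lam q a ->
  play_eqv (tau a, a) (q, a).
Hypothesis tau_bounded : kbounded k tau.
Implicit Types (p q w : seq (A -> Prop)) (a b c e : A).

Lemma tau_nil a : tau a <> [::].
Proof. by case: (tau_gplay a). Qed.

Lemma tau_below b w c : w <> [::] -> prefix w (tau c) -> lam w b ->
  prefix (tau b) w /\ lam_along b (tau b) w.
Proof.
move=> w_nil w_tc b_w; have g_w := gplay_prefix (tau_gplay c) w_tc w_nil.
have bw_eqv := tau_vc g_w w_tc b_w; have tb_w := tau_min g_w bw_eqv.
by split=> //; case: (play_eqv_prefix_inv bw_eqv tb_w).
Qed.

Lemma lam_tau_deeper a b c : lam (tau c) a -> lam (tau c) b ->
  size (tau a) <= size (tau b) -> lam (tau b) a.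
Proof.
move=> a_tc b_tc le_ab.
have [ta_tc a_along] := tau_below (@tau_nil c) (prefix_refl _) a_tc.
have [tb_tc _] := tau_below (@tau_nil c) (prefix_refl _) b_tc.
exact: a_along (prefix_leq_size ta_tc tb_tc le_ab) tb_tc.
Qed.

Definition is_tau w : bool :=
  if excluded_middle_informative (exists c, tau c = w) then true else false.

Lemma is_tauP w : reflect (exists c, tau c = w) (is_tau w).
Proof. by rewrite /is_tau; case: excluded_middle_informative => ?; constructor. Qed.

(* Only the bags of the prefixes of tau a that are themselves values of tau are kept:
   the other bags of tau a need not be k-bounded. *)
Definition ctau a := map (@lam A) (prefixes_in is_tau (tau a)).

Lemma last_prefixes_in_tau a :
  prefixes_in is_tau (tau a) <> [::] /\ last [::] (prefixes_in is_tau (tau a)) = tau a.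
Proof. by apply: last_prefixes_in (@tau_nil a); apply/is_tauP; exists a. Qed.

Lemma lam_ctau a : lam (ctau a) = lam (tau a).
Proof.
have [C_nil C_last] := last_prefixes_in_tau a.
by rewrite /lam /ctau (last_map_nonnil _ _ [::] C_nil) -/(lam _) C_last.
Qed.

Lemma ctau_kgplay a : kgplay g k (ctau a).
Proof.
have [C_nil _] := last_prefixes_in_tau a.
split; first by rewrite /ctau; case: (prefixes_in _ _) C_nil.
move=> X /(@In_map _ _ (@lam A)) [w /In_prefixes_in [/is_tauP [c <-] _ _] ->].
split; last exact: tau_bounded.
by have [c_nil g_c] := tau_gplay c; apply/g_c/In_last.
Qed.

Lemma ctau_valid a : valid g k (ctau a, a).
Proof. by split; [apply: ctau_kgplay | rewrite /= lam_ctau]. Qed.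

Definition class_ctau a : Gk g k A := class_of (ctau_valid a).

Lemma ctau_eqv b e : lam (tau e) b -> play_eqv (ctau b, b) (ctau e, b).
Proof.
move=> b_te; have [tb_te b_along] := tau_below (@tau_nil e) (prefix_refl _) b_te.
have Cb_Ce := prefix_prefixes_in is_tau tb_te.
have [Cb_nil _] := last_prefixes_in_tau b.
apply: play_eqv_prefix; first exact: map_prefix.
  by rewrite /ctau; case: (prefixes_in _ _) Cb_nil.
move=> u bu ue; rewrite (prefix_mapE ue).
have [le_bu le_ue] := (size_prefix bu, size_prefix ue); rewrite !size_map in le_bu le_ue.
set v := take _ _; have v_Ce : prefix v _ := prefix_take _ _.
have size_v : size v = size u by rewrite size_takel.
have v_nil : v <> [::].
  by move=> v0; move: le_bu; rewrite -size_v v0; case: (prefixes_in _ _) Cb_nil.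
have [w [v_eq /is_tauP [c tc] w_te _]] := prefixes_in_of_prefix v_Ce v_nil.
have tb_w : prefix (tau b) w.
  apply: prefix_of_prefixes_in (introT (is_tauP _) (ex_intro _ b erefl)) (@tau_nil b) _.
  by rewrite -v_eq; apply: prefix_leq_size Cb_Ce v_Ce _; rewrite size_v.
by rewrite v_eq -tc -/(ctau c) lam_ctau tc; apply: b_along.
Qed.

Lemma is_class_ctau b c : lam (tau c) b -> is_class (class_ctau b) (ctau c) b.
Proof.
move=> b_tc; apply: is_class_rep (is_class_of (ctau_valid b)) _ (ctau_eqv b_tc).
by split; [apply: ctau_kgplay | rewrite /= lam_ctau].
Qed.

Lemma take_ctau a i : i < size (ctau a) -> exists c, take i.+1 (ctau a) = ctau c.
Proof.
rewrite size_map => lt_i; have [/is_tauP [c tc] _ _] := In_prefixes_in (In_nth [::] lt_i).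
by exists c; rewrite -map_take take_prefixes_in // -tc.
Qed.

Lemma class_ctau_hom : hom class_ctau.
Proof.
move=> R t Rt; case: (classic (inhabited 'I_(arity R))) => [[j0]|no_j]; last first.
  by exists [::], t; split=> // j; case: no_j.
have [x _ x_max] := @arg_maxnP _ j0 xpredT (fun j => size (tau (t j))) isT.
exists (ctau (t x)), t; split=> // j; apply: is_class_ctau.
have [-> | neq_jx] := classic (t j = t x); first exact: tau_refl.
have [c [j_tc x_tc]] : exists c, lam (tau c) (t j) /\ lam (tau c) (t x).
  by apply: tau_edge; split=> //; exists R, t; split=> //; [exists j | exists x].
exact: lam_tau_deeper j_tc x_tc (x_max j isT).
Qed.

Lemma sharp_ctau a : sharp g k (ctau a) = map (image class_ctau) (ctau a).
Proof.
apply: (@eq_from_nth _ (fun _ => False)) => [|i]; first by rewrite size_mkseq size_map.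
rewrite size_mkseq => lt_i; rewrite nth_mkseq // (nth_map (fun _ => False)) //.
have [c ctau_i] := take_ctau lt_i.
have lam_i : nth (fun _ => False) (ctau a) i = lam (tau c).
  by rewrite -lam_ctau -ctau_i lam_take.
apply: functional_extensionality => d; apply: propositional_extensionality.
rewrite lam_i ctau_i; split=> [[b [b_tc b_d]]|[b [b_tc ->]]]; exists b; split=> //.
  exact: is_class_fun b_d (is_class_ctau b_tc).
exact: is_class_ctau.
Qed.

Lemma class_ctau_coalgebra : coalgebra class_ctau.
Proof.
split=> [|a|a]; first exact: class_ctau_hom.
  by exists (ctau a); apply: is_class_of.
have v_sharp : valid g k (sharp g k (ctau a), class_ctau a).
  rewrite sharp_ctau; split; first exact/kgplay_image/ctau_kgplay/class_ctau_hom.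
  have [ctau_nil _] := ctau_kgplay a.
  rewrite /= /lam (last_map_nonnil _ _ (fun _ => False) ctau_nil) -/(lam _).
  by exists a; rewrite lam_ctau.
exists (class_of v_sharp); split; exists (ctau a), a; split; try exact: is_class_of.
by rewrite -sharp_ctau; apply: is_class_of.
Qed.

End DecompositionToCoalgebra.

Lemma has_decomp_coalgebra (s : signature) (g : guarding) (k : nat) (A : structure s) :
  has_decomp g k A -> has_coalgebra g k A.
Proof.
move=> [tau [[tau_gplay tau_refl tau_edge tau_min tau_vc] tau_bounded]].
by exists (class_ctau tau_gplay tau_refl tau_bounded); apply: class_ctau_coalgebra.
Qed.

Lemma has_decomp_iff_coalgebra (s : signature) (g : guarding) (k : nat) (A : structure s) :
  has_decomp g k A <-> has_coalgebra g k A.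
Proof. by split; [apply: has_decomp_coalgebra | apply: has_coalgebra_decomp]. Qed.

Theorem theorem4p14 (s : signature) (g : guarding) (A : structure s) (n : nat) :
  is_guarded_treewidth g A n <-> is_coalgebra_number g A n.
Proof.
rewrite /is_guarded_treewidth /is_coalgebra_number.
split=> [[decomp_n n_min] | [coalg_n n_min]]; split=> [|j /has_decomp_iff_coalgebra];
  by [apply/has_decomp_iff_coalgebra | apply: n_min].
Qed.
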